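(* Let $k\ge1$ with $2^k\le n+1$. Let $\mathbf{SB}_n^{2^k-1}$ be the set of all $f\in\mathbf{SB}_n$ with $\deg(f)\le 2^k-1$. Then $\mathbf{SB}_n^{2^k-1}$ equals the subring of $\mathbf{B}_n$ generated (together with the constants) by $\sigma_1,\sigma_2,\sigma_4,\dots,\sigma_{2^{k-1}}$, and the map $\tau:\mathbf{B}_k\to\mathbf{SB}_n^{2^k-1}$, $F(y_1,\dots,y_k)\mapsto F(\sigma_1,\sigma_2,\sigma_4,\dots,\sigma_{2^{k-1}})$ is a ring isomorphism.
   Context: $\mathbf{B}_n$ is the ring of Boolean functions $\mathbb{F}_2^n\to\mathbb{F}_2$ under pointwise addition and multiplication; $\mathbf{SB}_n$ is the subset of symmetric functions. $\sigma_i$ is the $i$-th elementary symmetric function of $x_1,\dots,x_n$ over $\mathbb{F}_2$. $\deg$ denotes algebraic degree (degree of the algebraic normal form). *)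

From HB Require Import structures.
From mathcomp Require Import all_boot all_order all_fingroup all_algebra.
Set Implicit Arguments. Unset Strict Implicit. Unset Printing Implicit Defensive.
Import GRing.Theory.
Local Open Scope ring_scope.

Definition vec (n : nat) := {ffun 'I_n -> 'F_2}.
Definition Bn (n : nat) := {ffun vec n -> 'F_2}.

(* coefficient of the monomial prod_{i in S} x_i in the algebraic normal form
   (Moebius transform) *)
Definition anf_coef (n : nat) (f : Bn n) (S : {set 'I_n}) : 'F_2 :=
  \sum_(x : vec n | [forall i, (x i != 0) ==> (i \in S)]) f x.

(* algebraic degree = max size of a monomial in the ANF (0 for f = 0) *)
Definition deg (n : nat) (f : Bn n) : nat :=
  (\max_(S : {set 'I_n} | anf_coef f S != 0%R) #|S|)%N.

Definition symmetric (n : nat) (f : Bn n) : Prop :=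
  forall (s : 'S_n) (x : vec n), f [ffun i => x (s i)] = f x.

Definition SBdeg (n d : nat) (f : Bn n) : Prop := symmetric f /\ (deg f <= d)%N.

Definition sigma (n i : nat) : Bn n :=
  [ffun x : vec n => \sum_(S : {set 'I_n} | #|S| == i) \prod_(j in S) x j].

Inductive in_subring (n : nat) (G : seq (Bn n)) : Bn n -> Prop :=
| sr_gen g : g \in G -> in_subring G g
| sr_zero : in_subring G 0
| sr_one : in_subring G 1
| sr_opp f : in_subring G f -> in_subring G (- f)
| sr_add f g : in_subring G f -> in_subring G g -> in_subring G (f + g)
| sr_mul f g : in_subring G f -> in_subring G g -> in_subring G (f * g).

Definition gens (n k : nat) : seq (Bn n) := [seq sigma n (2 ^ i) | i <- iota 0 k].

Definition tau (n k : nat) (F : Bn k) : Bn n :=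
  [ffun x : vec n => F [ffun i : 'I_k => sigma n (2 ^ i) x]].

From Pilot Require Import Defs.
From HB Require Import structures.
From mathcomp Require Import all_boot all_order all_fingroup all_algebra.
Set Implicit Arguments. Unset Strict Implicit. Unset Printing Implicit Defensive.
Import GRing.Theory.
Local Open Scope ring_scope.

(* A point x of F_2^n has Hamming weight w = #|supp x|, and sigma_m(x) is the
   binomial coefficient C(w, m) mod 2.  By the Lucas step
   (1 + X)^(2^j) = 1 + X^(2^j) over F_2, C(w, 2^j) mod 2 is the j-th binary
   digit of w, so tau F (x) = F(bits of w).  Two further facts do the work:
   - symmetric functions are exactly the functions g(w) of the weight, and the
     ANF coefficient of x^S in such a function is the binomial transform
     sum_j C(#|S|, j) g(j);
   - this transform is triangular, hence injective, and it vanishes from 2^k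
     on for 2^k-periodic weight functions (again by the Lucas step).
   Hence tau F is symmetric of degree < 2^k, and every such function is
   tau F for F determined by the first 2^k weights; tau is injective when all
   weights < 2^k occur, i.e. 2^k <= n + 1.  Finally tau is the pullback along
   x |-> (sigma_(2^i)(x))_i, a ring morphism, and B_k is generated by its
   coordinates, so the image of tau is the subring generated by the
   sigma_(2^i). *)

Lemma F2_cases (a : 'F_2) : a = 0 \/ a = 1.
Proof. by case: a => [[|[|]]] // ?; [left | right]; apply: val_inj. Qed.

Lemma F2_addxx (a : 'F_2) : a + a = 0.
Proof. by case: (F2_cases a) => ->; apply/eqP. Qed.

Lemma F2_boolE (a : 'F_2) : a = (a != 0)%:R.
Proof. by case: (F2_cases a) => ->; apply/eqP. Qed.

Lemma F2_bool_inj : injective (fun b : bool => b%:R : 'F_2).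
Proof. by do 2!case; move/eqP. Qed.

Lemma F2_literal (a b : 'F_2) : (if b == 0 then a + 1 else a) = (a == b)%:R.
Proof. by case: (F2_cases a) => ->; case: (F2_cases b) => ->; apply/eqP. Qed.

(* Binomial coefficients modulo 2: the Lucas step.  Since (1 + X)^(2^j) =
   1 + X^(2^j) over F_2, adding 2^j to the top shifts Pascal's row by 2^j. *)

Lemma coef_X1_exp m i : (('X + 1) ^+ m : {poly 'F_2})`_i = ('C(m, i))%:R.
Proof.
elim: m i => [|m IH] [|i]; rewrite ?expr0 ?coef1 ?bin0n //.
  by rewrite exprSr mulrDr mulr1 coefD coefMX IH add0r !bin0.
by rewrite exprSr mulrDr mulr1 coefD coefMX !IH binS natrD addrC.
Qed.

Lemma X1_exp_pow2 j : (('X + 1) ^+ (2 ^ j) : {poly 'F_2}) = 'X^(2 ^ j) + 1.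
Proof.
by rewrite exprDn_pchar ?expr1n // pnatX pnatE // pchar_poly pchar_Fp.
Qed.

Lemma binomial_add_pow2 m j i :
  ('C(2 ^ j + m, i))%:R =
  (if (i < 2 ^ j)%N then 0 else ('C(m, i - 2 ^ j))%:R) + ('C(m, i))%:R :> 'F_2.
Proof.
rewrite -!coef_X1_exp exprD X1_exp_pow2 mulrDl mul1r coefD coefXnM.
by case: ifP => // _; rewrite coef_X1_exp.
Qed.

Lemma binomial_pow2 w j : ('C(w, 2 ^ j))%:R = (odd (w %/ 2 ^ j))%:R :> 'F_2.
Proof.
elim/ltn_ind: w => w IH; case: (ltnP w (2 ^ j)) => [lt_w|le_w].
  by rewrite bin_small // divn_small.
rewrite -(subnKC le_w) binomial_add_pow2 ltnn subnn bin0 IH; last first.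
  by rewrite ltn_subrL expn_gt0 /=; apply: leq_trans le_w; rewrite expn_gt0.
rewrite divnDl ?dvdnn // divnn expn_gt0 add1n /=.
by case: (odd _); rewrite ?F2_addxx ?addr0.
Qed.

Definition bits k (w : nat) : vec k := [ffun i : 'I_k => (odd (w %/ 2 ^ i))%:R].

Lemma bits_inj_lt k w w' : (w < 2 ^ k)%N -> (w' < 2 ^ k)%N ->
  bits k w = bits k w' -> w = w'.
Proof.
elim: k w w' => [|k IH] w w'.
  by rewrite expn0 !ltnS !leqn0 => /eqP -> /eqP ->.
rewrite expnSr -!ltn_divLR // => hw hw' /ffunP eq_bits.
have eq_odd i : (i < k.+1)%N -> odd (w %/ 2 ^ i) = odd (w' %/ 2 ^ i).
  by move=> hi; apply: F2_bool_inj; have := eq_bits (Ordinal hi); rewrite !ffunE.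
have e0 := eq_odd 0%N isT; rewrite expn0 !divn1 in e0.
have e_half : w./2 = w'./2.
  rewrite -!divn2; apply: IH hw hw' _; apply/ffunP => i; rewrite !ffunE.
  by rewrite -!divnMA -expnS eq_odd ?ltnS ?ltn_ord.
by rewrite -(odd_double_half w) -(odd_double_half w') e0 e_half.
Qed.

Lemma bits_mod k w : bits k (w %% 2 ^ k) = bits k w.
Proof.
apply/ffunP => i; rewrite !ffunE {2}(divn_eq w (2 ^ k)).
case: i => i /= lt_ik; rewrite -(subnK (ltnW lt_ik)) expnD mulnA.
by rewrite divnMDl ?expn_gt0 // oddD oddM oddX subn_eq0 leqNgt lt_ik andbF.
Qed.

Lemma bits_surj k (b : vec k) : exists2 w, (w < 2 ^ k)%N & bits k w = b.
Proof.
have inj : injective (fun w : 'I_(2 ^ k) => bits k w).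
  by move=> u v /bits_inj_lt eq_uv; apply: val_inj; apply: eq_uv.
have := inj_card_onto inj; rewrite card_ffun card_Fp // !card_ord.
by case/(_ (leqnn _) b)/codomP => w ->; exists w.
Qed.

Definition unbits k (b : vec k) : nat :=
  if [pick w : 'I_(2 ^ k) | bits k w == b] is Some w then w else 0.

Lemma unbits_lt k (b : vec k) : (unbits b < 2 ^ k)%N.
Proof. by rewrite /unbits; case: pickP; rewrite ?expn_gt0. Qed.

Lemma unbitsK k (b : vec k) : bits k (unbits b) = b.
Proof.
rewrite /unbits; case: pickP => [w /eqP //|no_w].
by have [w lt_w eq_b] := bits_surj b; have := no_w (Ordinal lt_w); rewrite eq_b eqxx.
Qed.

Lemma bitsK k w : unbits (bits k w) = (w %% 2 ^ k)%N.
Proof.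
apply: (@bits_inj_lt k); rewrite ?unbits_lt ?ltn_mod ?expn_gt0 //.
by rewrite unbitsK bits_mod.
Qed.

Definition chi n (A : {set 'I_n}) : vec n := [ffun i => (i \in A)%:R].
Definition supp n (x : vec n) : {set 'I_n} := [set i | x i != 0].

Lemma chiK n : cancel (@chi n) (@supp n).
Proof.
by move=> A; apply/setP => i; rewrite inE ffunE; case: (i \in A); rewrite ?oner_eq0.
Qed.

Lemma suppK n : cancel (@supp n) (@chi n).
Proof. by move=> x; apply/ffunP => i; rewrite ffunE inE -F2_boolE. Qed.

Lemma set_of_size n m : (m <= n)%N -> exists A : {set 'I_n}, #|A| = m.
Proof.
move=> le_mn; have : (0 < #|[set A : {set 'I_n} | #|A| == m]|)%N.
  by rewrite card_draws card_ord bin_gt0.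
by case/card_gt0P => A; rewrite inE => /eqP; exists A.
Qed.

Lemma monomialE n (x : vec n) (S : {set 'I_n}) :
  \prod_(j in S) x j = (S \subset supp x)%:R.
Proof.
case: (boolP (S \subset supp x)) => [sub_S | /subsetPn [j jS]].
  rewrite big1 // => j /(subsetP sub_S); rewrite inE => nz_j.
  by rewrite (F2_boolE (x j)) nz_j.
by rewrite inE negbK => /eqP x_j0; rewrite (bigD1 j) //= x_j0 mul0r.
Qed.

Lemma sigmaE n m (x : vec n) : sigma n m x = ('C(#|supp x|, m))%:R.
Proof.
rewrite ffunE (eq_bigr _ (fun S _ => monomialE x S)).
rewrite -(cards_draws (supp x)) -sumr_const.
rewrite big_mkcond [RHS]big_mkcond; apply: eq_bigr => S _.
by rewrite inE andbC; case: (#|S| == m); case: (S \subset _).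
Qed.

Lemma tauE n k (F : Bn k) (x : vec n) : tau n F x = F (bits k #|supp x|).
Proof.
rewrite ffunE; congr (F _); apply/ffunP => i.
by rewrite [LHS]ffunE sigmaE ffunE binomial_pow2.
Qed.

Definition weight_fun n (f : Bn n) (g : nat -> 'F_2) : Prop :=
  forall x, f x = g #|supp x|.

Lemma supp_perm n (s : 'S_n) (x : vec n) :
  #|supp [ffun i => x (s i)]| = #|supp x|.
Proof.
rewrite -(card_preimset (supp x) (@perm_inj _ s)); apply: eq_card => i.
by rewrite !(inE, ffunE).
Qed.

Lemma weight_fun_symmetric n (f : Bn n) g : weight_fun f g -> Defs.symmetric f.
Proof. by move=> f_g s x; rewrite !f_g supp_perm. Qed.

(* Two sets of equal size are exchanged by a product of transpositions, each
   of which reduces the size of the set difference. *)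
Lemma symmetric_chi_card n (f : Bn n) : Defs.symmetric f ->
  forall A B : {set 'I_n}, #|A| = #|B| -> f (chi A) = f (chi B).
Proof.
move=> sym_f A B; have [d] := ubnP #|A :\: B|.
elim: d A => // d IH A lt_d eq_card.
case: (boolP (A \subset B)) => [sub_AB | /subsetPn [a aA aNB]].
  by have /eqP -> : A == B by rewrite eqEcard sub_AB eq_card leqnn.
have /subsetPn [b bB bNA] : ~~ (B \subset A).
  apply: contra aNB => sub_BA.
  by have /eqP -> : B == A by rewrite eqEcard sub_BA eq_card leqnn.
have chi_s : [ffun i => chi A (tperm a b i)] = chi (tperm a b @^-1: A).
  by apply/ffunP => i; rewrite !ffunE inE.
rewrite -(sym_f (tperm a b)) chi_s; apply: IH; last first.
  by rewrite card_preimset ?eq_card //; apply: perm_inj.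
apply: (@leq_trans #|A :\: B|); last by rewrite -ltnS.
apply: proper_card; apply/properP; split.
  apply/subsetP => i; rewrite !inE.
  by case: tpermP => [-> | -> |]; rewrite ?bB ?(negbTE bNA) ?andbF // => _ _ ->.
by exists a; rewrite !inE ?aA ?aNB // tpermL (negbTE bNA).
Qed.

Lemma symmetric_weight_fun n (f : Bn n) :
  Defs.symmetric f -> exists g, weight_fun f g.
Proof.
move=> sym_f.
exists (fun w => f (chi (odflt set0 [pick A : {set 'I_n} | #|A| == w]))).
move=> x; rewrite -{1}(suppK x); case: pickP => [A /eqP eq_card | /(_ (supp x))].
  exact: symmetric_chi_card.
by rewrite eqxx.
Qed.

(* The binomial transform of a weight function h: by the lemma anf_weight
   below, it computes the ANF coefficients of the symmetric function with
   weight function h. *)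

Definition btrans (m : nat) (h : nat -> 'F_2) : 'F_2 :=
  \sum_(j < m.+1) ('C(m, j))%:R * h j.

Lemma btrans_widen N m h :
  (m < N)%N -> btrans m h = \sum_(j < N) ('C(m, j))%:R * h j.
Proof.
move=> lt_mN; rewrite /btrans (big_ord_widen N (fun j => ('C(m, j))%:R * h j)) //.
rewrite big_mkcond; apply: eq_bigr => j _.
by case: ifPn => //; rewrite -leqNgt => /bin_small ->; rewrite mul0r.
Qed.

Lemma btrans_eq m g h :
  (forall j, (j <= m)%N -> g j = h j) -> btrans m g = btrans m h.
Proof. by move=> eq_gh; apply: eq_bigr => j _; rewrite eq_gh // -ltnS. Qed.

(* A 2^k-periodic weight function has a vanishing transform from 2^k on:
   by the Lucas step, the transform at d + 2^k is twice the one at d. *)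
Lemma btrans_periodic k h : (forall j, h (j + 2 ^ k)%N = h j) ->
  forall m, (2 ^ k <= m)%N -> btrans m h = 0.
Proof.
move=> h_per m le_m; rewrite -(subnKC le_m); move: (m - _)%N => d.
have lt_d : (d < (2 ^ k + d).+1)%N by rewrite ltnS leq_addl.
rewrite /btrans; under eq_bigr do rewrite binomial_add_pow2 mulrDl.
rewrite big_split /= -btrans_widen // -addnS big_split_ord /= big1 ?add0r.
  by rewrite -[RHS](F2_addxx (btrans d h)); congr (_ + _); apply: eq_bigr => j _;
    rewrite /= ltnNge leq_addr /= addKn addnC h_per.
by move=> j _; rewrite /= ltn_ord mul0r.
Qed.

(* The transform is triangular with unit diagonal, hence injective on any
   initial segment. *)
Lemma btrans_inj N g h : (forall m, (m <= N)%N -> btrans m g = btrans m h) ->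
  forall m, (m <= N)%N -> g m = h m.
Proof.
move=> eq_tr; elim/ltn_ind => m IH le_mN.
have := eq_tr m le_mN; rewrite /btrans !big_ord_recr /= binn !mul1r.
rewrite (eq_bigr (fun j : 'I_m => ('C(m, j))%:R * h j)); first exact: addrI.
by move=> j _; rewrite IH // (leq_trans _ le_mN) // ltnW.
Qed.

(* The ANF coefficient of x^S in a weight function is the transform at #|S|:
   it sums the weight function over the subsets of S, grouped by size. *)
Lemma anf_weight n (f : Bn n) g S : weight_fun f g -> anf_coef f S = btrans #|S| g.
Proof.
move=> f_g; rewrite /anf_coef (reindex (@chi n)); last first.
  by apply: onW_bij; exists (@supp n); [apply: chiK | apply: suppK].
have sub_S A : [forall i, (chi A i != 0) ==> (i \in S)] = (A \subset S).
  apply/forallP/subsetP => [sub i iA | sub i].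
    by have := sub i; rewrite ffunE iA oner_eq0.
  by rewrite ffunE; case: (boolP (i \in A)) => [/sub -> | _]; rewrite ?implybT ?eqxx.
rewrite (eq_bigl _ _ sub_S); under eq_bigr => A _ do rewrite f_g chiK.
have le_S A : A \subset S -> (#|A| < #|S|.+1)%N := @subset_leq_card _ A S.
pose size_of (A : {set 'I_n}) : 'I_#|S|.+1 := inord #|A|.
rewrite (@partition_big _ _ _ _ _ _ _ size_of xpredT) //=.
apply: eq_bigr => j _; rewrite (eq_bigr (fun _ => g j)); last first.
  by move=> A /andP[/le_S lt_A /eqP <-]; rewrite inordK.
rewrite sumr_const -(cards_draws S) mulr_natl; congr (_ *+ _).
apply: eq_card => A; rewrite unfold_in !inE.
case: (boolP (A \subset S)) => //= /le_S lt_A.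
by rewrite -(inj_eq val_inj) /= inordK.
Qed.

Lemma deg_leP n (f : Bn n) d :
  (deg f <= d)%N <-> (forall S : {set 'I_n}, (d < #|S|)%N -> anf_coef f S = 0).
Proof.
split => [/bigmax_leqP le_d S | vanish].
  by rewrite ltnNge; apply: contraNeq => /le_d.
by apply/bigmax_leqP => S; apply: contraR; rewrite -ltnNge => /vanish ->.
Qed.

Definition pullback n m (phi : vec n -> vec m) (F : Bn m) : Bn n :=
  [ffun x => F (phi x)].

Section Pullback.
Variables (n m : nat) (phi : vec n -> vec m).

Lemma pullback0 : pullback phi 0 = 0.
Proof. by apply/ffunP => x; rewrite !ffunE. Qed.

Lemma pullback1 : pullback phi 1 = 1.
Proof. by apply/ffunP => x; rewrite !ffunE. Qed.

Lemma pullbackN F : pullback phi (- F) = - pullback phi F.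
Proof. by apply/ffunP => x; rewrite !ffunE. Qed.

Lemma pullbackD F G : pullback phi (F + G) = pullback phi F + pullback phi G.
Proof. by apply/ffunP => x; rewrite !ffunE. Qed.

Lemma pullbackM F G : pullback phi (F * G) = pullback phi F * pullback phi G.
Proof. by apply/ffunP => x; rewrite !ffunE. Qed.

Lemma in_subring_pullback G F :
  in_subring G F -> in_subring [seq pullback phi g | g <- G] (pullback phi F).
Proof.
elim=> [g Gg | | | F1 _ IH | F1 F2 _ IH1 _ IH2 | F1 F2 _ IH1 _ IH2].
- by apply: sr_gen; apply: map_f.
- by rewrite pullback0; apply: sr_zero.
- by rewrite pullback1; apply: sr_one.
- by rewrite pullbackN; apply: sr_opp.
- by rewrite pullbackD; apply: sr_add.
- by rewrite pullbackM; apply: sr_mul.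
Qed.

Lemma in_subring_pullback_image G f :
  in_subring [seq pullback phi g | g <- G] f -> exists F, pullback phi F = f.
Proof.
elim=> [g /mapP [g' _ ->] | | | _ _ [F <-] | _ _ _ [F1 <-] _ [F2 <-]
       | _ _ _ [F1 <-] _ [F2 <-]].
- by exists g'.
- by exists 0; apply: pullback0.
- by exists 1; apply: pullback1.
- by exists (- F); apply: pullbackN.
- by exists (F1 + F2); apply: pullbackD.
- by exists (F1 * F2); apply: pullbackM.
Qed.

End Pullback.

(* Every Boolean function is a polynomial in the coordinates: it is the sum of
   the indicators of the points where it equals 1, and the indicator of b is
   the product over i of x_i or x_i + 1. *)

Definition coord n (i : 'I_n) : Bn n := [ffun x : vec n => x i].

Lemma prod_ffunE n (I : Type) (r : seq I) (P : pred I) (G : I -> Bn n) x :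
  (\prod_(i <- r | P i) G i) x = \prod_(i <- r | P i) G i x.
Proof. by elim/big_rec2: _ => // [|i _ y _ <-]; rewrite !ffunE. Qed.

Definition point_indicator n (b : vec n) : Bn n :=
  \prod_i (if b i == 0 then coord i + 1 else coord i).

Lemma point_indicatorE n (b x : vec n) : point_indicator b x = (x == b)%:R.
Proof.
rewrite prod_ffunE.
under eq_bigr => i _ do rewrite (fun_if (fun f : Bn n => f x)) !ffunE F2_literal.
case: eqP => [-> | /eqP neq_xb]; first by rewrite big1 // => i _; rewrite eqxx.
have [i neq_i] : exists i, x i != b i.
  by apply/existsP; apply: contraR neq_xb => /existsPn eq_xb; apply/eqP/ffunP => i;
    apply/eqP; rewrite -[_ == _]negbK eq_xb.
by rewrite (bigD1 i) //= (negbTE neq_i) mul0r.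
Qed.

Lemma Bn_polynomial n (F : Bn n) : in_subring [seq coord i | i <- enum 'I_n] F.
Proof.
have -> : F = \sum_(b | F b != 0) point_indicator b.
  apply/ffunP => x; rewrite sum_ffunE (eq_bigr _ (fun b _ => point_indicatorE b x)).
  rewrite {1}(F2_boolE (F x)); case: (boolP (F x != 0)) => [nz_x | z_x].
    rewrite (bigD1 x) //= eqxx big1 ?addr0 // => b /andP[_ /negbTE].
    by rewrite eq_sym => ->.
  by rewrite big1 // => b nz_b; case: eqP => // eq_xb; rewrite eq_xb nz_b in z_x.
apply: big_ind => [||b _]; [exact: sr_zero | exact: sr_add |].
apply: big_ind => [||i _]; [exact: sr_one | exact: sr_mul |].
have coord_i : in_subring [seq coord i | i <- enum 'I_n] (coord i).
  by apply: sr_gen; apply: map_f; rewrite mem_enum.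
by case: ifP => _ //; apply: sr_add coord_i (sr_one _).
Qed.

Definition sigma_vec n k (x : vec n) : vec k :=
  [ffun i : 'I_k => sigma n (2 ^ i) x].

Lemma tau_pullback n k : @tau n k = pullback (@sigma_vec n k).
Proof. by []. Qed.

Lemma gens_pullback n k :
  gens n k =
  [seq pullback (@sigma_vec n k) g | g <- [seq coord i | i <- enum 'I_k]].
Proof.
rewrite /gens -val_enum_ord -!map_comp; apply: eq_map => i /=.
by apply/ffunP => x; rewrite !ffunE.
Qed.

(* tau F is symmetric of degree < 2^k: its weight function F o bits is
   2^k-periodic, so its binomial transform vanishes from 2^k on. *)
Lemma tau_SB n k (F : Bn k) : SBdeg (2 ^ k - 1) (tau n F).
Proof.
have tau_w : weight_fun (tau n F) (fun w => F (bits k w)) := tauE F.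
split; first exact: weight_fun_symmetric tau_w.
apply/deg_leP => S lt_S; rewrite (anf_weight _ tau_w).
apply: (btrans_periodic (k := k)).
  by move=> j /=; rewrite -[in LHS]bits_mod modnDr bits_mod.
by move: lt_S; rewrite subn1 prednK ?expn_gt0.
Qed.

(* Conversely, the weight function g of a symmetric f of degree < 2^k agrees
   with its 2^k-periodisation: both have the same binomial transform on
   [0, n], which vanishes from 2^k on. *)
Lemma SB_tau n k (f : Bn n) : SBdeg (2 ^ k - 1) f -> exists F : Bn k, tau n F = f.
Proof.
move=> [sym_f deg_f]; have [g f_g] := symmetric_weight_fun sym_f.
pose h w := g (w %% 2 ^ k)%N.
have h_periodic j : h (j + 2 ^ k)%N = h j by rewrite /h modnDr.
have g_periodic : forall m, (m <= n)%N -> g m = h m.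
  apply: btrans_inj => m le_mn; case: (ltnP m (2 ^ k)) => [lt_m | le_m].
    by apply: btrans_eq => j le_jm; rewrite /h modn_small // (leq_ltn_trans le_jm).
  have [S card_S] := set_of_size le_mn.
  rewrite (btrans_periodic h_periodic le_m).
  rewrite -card_S -(anf_weight _ f_g); move/deg_leP: deg_f; apply.
  by rewrite card_S subn1 prednK ?expn_gt0.
exists [ffun b => g (unbits b)]; apply/ffunP => x.
have le_wn : (#|supp x| <= n)%N by apply: leq_trans (max_card _) _; rewrite card_ord.
by rewrite tauE ffunE bitsK f_g (g_periodic _ le_wn).
Qed.

(* tau is injective as soon as every weight below 2^k occurs in F_2^n. *)
Lemma tau_inj n k : (2 ^ k <= n + 1)%N -> injective (@tau n k).
Proof.
move=> le_kn F G eq_FG; apply/ffunP => b.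
have [A card_A] : exists A : {set 'I_n}, #|A| = unbits b.
  by apply: set_of_size; move: le_kn; rewrite addn1; apply: leq_trans (unbits_lt b).
by rewrite -(unbitsK b) -card_A -(chiK A) -!tauE eq_FG.
Qed.

Theorem theorem2 (n k : nat) (hk : (1 <= k)%N) (hkn : (2 ^ k <= n + 1)%N) :
  (forall f : Bn n, SBdeg (2 ^ k - 1) f <-> in_subring (gens n k) f) /\
  (forall F : Bn k, SBdeg (2 ^ k - 1) (tau n F)) /\
  tau n (1 : Bn k) = 1 /\
  (forall F G : Bn k, tau n (F + G) = tau n F + tau n G) /\
  (forall F G : Bn k, tau n (F * G) = tau n F * tau n G) /\
  injective (@tau n k) /\
  (forall f : Bn n, SBdeg (2 ^ k - 1) f -> exists F : Bn k, tau n F = f).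
Proof.
split=> [f|].
  rewrite gens_pullback; split.
    case/SB_tau => F <-; rewrite tau_pullback.
    by apply: in_subring_pullback; apply: Bn_polynomial.
  by case/in_subring_pullback_image => F <-; rewrite -tau_pullback; apply: tau_SB.
split; first exact: tau_SB.
split; first by rewrite tau_pullback pullback1.
split; first by move=> F G; rewrite tau_pullback pullbackD.
split; first by move=> F G; rewrite tau_pullback pullbackM.
by split; [exact: tau_inj | exact: SB_tau].
Qed.
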